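(* Let $n$ be a positive integer. Then $\mathcal{L}_n \subseteq \mathcal{M}_n$. Moreover, every $\alpha \in \mathcal{L}_n$ can be realized as $\alpha = \mu_n(\xi,\xi')$ for some reals $\xi \neq \xi'$ for which the supremum defining $\mu_n(\xi,\xi')$ is attained at some $(s,t) \in \mathbb{Z}^2\setminus\{0\}$.
   Context: For an irrational real $\xi$ and positive integer $n$, $\lambda_n(\xi) = \limsup_{s/t \to \xi} \dfrac{\gcd(t,n)}{t^2 \left| \frac{s}{t} - \xi\right|}$ (limsup over rationals $s/t$, $t>0$, tending to $\xi$), and $\mathcal{L}_n = \{\lambda_n(\xi)\in\mathbb{R} : \xi\in\mathbb{R}\setminus\mathbb{Q}\}$. For reals $\xi\ne\xi'$, $\mu_n(\xi,\xi') = \sup_{(s,t)\in\mathbb{Z}^2\setminus\{0\}} \dfrac{\gcd(t,n)\,|\xi-\xi'|}{|s-t\xi|\,|s-t\xi'|}$ (with $\gcd(0,n)=n$), and $\mathcal{M}_n$ is the set of finite values of $\mu_n(\xi,\xi')$ over pairs of reals $\xi\neq\xi'$. *)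

From HB Require Import structures.
From mathcomp Require Import all_boot all_order all_algebra.
From mathcomp Require Import all_classical all_reals.
From mathcomp Require Import ereal.
From mathcomp Require Import Rstruct.
From Stdlib Require Import Rdefinitions.
Set Implicit Arguments. Unset Strict Implicit. Unset Printing Implicit Defensive.
Import Order.TTheory GRing.Theory Num.Theory.
Local Open Scope classical_set_scope.
Local Open Scope ring_scope.

Notation RR := Rdefinitions.R.

(* gcd(t, n) for an integer t; note gcdn 0 n = n, matching gcd(0,n)=n. *)
Definition gcdZ (t : int) (n : nat) : nat := gcdn (absz t) n.

Definition irrational (x : RR) : Prop := ~ exists q : rat, x = ratr q.

Definition lam_term (n : nat) (xi : RR) (s t : int) : RR :=
  (gcdZ t n)%:R / ((t%:~R) ^+ 2 * `|s%:~R / t%:~R - xi|).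

(* lambda_n(xi) = limsup_{s/t -> xi, t > 0} lam_term
               = inf_{delta > 0} sup { lam_term s t : t > 0, |s/t - xi| < delta },
   as an extended real. *)
Definition lambda_n (n : nat) (xi : RR) : \bar RR :=
  ereal_inf [set ereal_sup
                   [set y | exists s t : int,
                       [/\ 0 < t, `|s%:~R / t%:~R - xi| < d &
                           y = (lam_term n xi s t)%:E]]
            | d in [set d : RR | 0 < d]].

Definition L_set (n : nat) : set RR :=
  [set a | exists xi : RR, irrational xi /\ lambda_n n xi = a%:E].

Definition mu_term (n : nat) (xi xi' : RR) (s t : int) : \bar RR :=
  let den := `|s%:~R - t%:~R * xi| * `|s%:~R - t%:~R * xi'| in
  if den == 0 then +oo%E
  else ((gcdZ t n)%:R * `|xi - xi'| / den)%:E.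

Definition mu_n (n : nat) (xi xi' : RR) : \bar RR :=
  ereal_sup [set mu_term n xi xi' st.1 st.2
            | st in [set st : int * int | st != (0, 0)]].

Definition M_set (n : nat) : set RR :=
  [set a | exists xi xi' : RR, xi != xi' /\ mu_n n xi xi' = a%:E].

From Pilot Require Import Defs.
From mathcomp Require Import all_boot all_order all_algebra.
From mathcomp Require Import all_classical all_reals.
From mathcomp Require Import ereal Rstruct.
From mathcomp Require Import topology normedtype sequences Rstruct_topology.
From mathcomp Require Import ring lra zify.
Set Implicit Arguments. Unset Strict Implicit. Unset Printing Implicit Defensive.
Import Order.TTheory GRing.Theory Num.Theory.
Import numFieldNormedType.Exports.
Local Open Scope classical_set_scope.
Local Open Scope ring_scope.

(* For each k pick a reduced fraction
   s_k/t_k with t_k > k whose lambda-term gcd(t_k,n)/(t_k |s_k - t_k xi|) lies in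
   (a - 1/(k+2), a + 1], and complete it to M_k = [[s_k, b_k], [t_k, d_k]] in SL_2(Z)
   with 0 <= d_k < t_k.  Pull infinity and xi back by M_k, to eta_k = -d_k/t_k and
   eta'_k = M_k^-1 xi.  The substitution (S, T) = M_k (x, y) turns
   gcd(T,n) |eta'_k - eta_k| / (|x - y eta'_k| |x - y eta_k|) into the lambda-term of
   S/T, which is at most a + e for large k, and which at (x, y) = (1, 0) is the
   lambda-term of s_k/t_k.  Along a subsequence on which (t_k, d_k) mod n is constant
   and eta_k -> eta, eta'_k -> eta', the limit form satisfies
   gcd(Cx + Dy, n) |eta' - eta| <= a |x - y eta'| |x - y eta|, with equality at (1, 0).
   A fixed M = [[A, B], [C, D]] of the subsequence maps eta', eta to points z, z'; the
   substitution (p, q) = M (x, y) then shows mu_n(z, z') = a, attained at (A, C). *)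

(** * Integers *)

Section GcdZ.
Variable n : nat.
Hypothesis n_gt0 : (0 < n)%N.

Lemma gcdZ_gt0 (t : int) : (0 < gcdZ t n)%N.
Proof. by rewrite /gcdZ gcdn_gt0 n_gt0 orbT. Qed.

Lemma gcdZ_le (t : int) : (gcdZ t n <= n)%N.
Proof. by rewrite /gcdZ dvdn_leq // dvdn_gcdr. Qed.

Lemma gcdZN (t : int) : gcdZ (- t) n = gcdZ t n.
Proof. by rewrite /gcdZ abszN. Qed.

Lemma gcdZ_mulr_le (t g : int) : g != 0 -> (gcdZ (t * g) n <= `|g| * gcdZ t n)%N.
Proof.
move=> g_neq0.
rewrite /gcdZ abszM; apply: dvdn_leq; first by rewrite muln_gt0 absz_gt0 g_neq0 gcdZ_gt0.
rewrite [(`|g| * _)%N]mulnC muln_gcdl dvdn_gcd dvdn_gcdl.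
exact: dvdn_trans (dvdn_gcdr _ _) (dvdn_mulr _ _).
Qed.

Lemma gcdZ_lin_modz (t d t' d' x y : int) :
  (t %% n)%Z = (t' %% n)%Z -> (d %% n)%Z = (d' %% n)%Z ->
  gcdZ (t * x + d * y) n = gcdZ (t' * x + d' * y) n.
Proof.
move=> tt' dd'; apply/eqP; rewrite -eqz_nat.
have gcdZE u : (gcdZ u n)%:Z = gcdz u n by rewrite /gcdZ /gcdz absz_nat.
rewrite !gcdZE -gcdz_modl -modzDml -modzMml tt' modzMml modzDml.
by rewrite -modzDmr -modzMml dd' modzMml modzDmr gcdz_modl.
Qed.

End GcdZ.

Lemma modz_finite_range (u : nat -> int) (n : nat) : (0 < n)%N ->
  finite_set (range (fun k => (u k %% n)%Z)).
Proof.
move=> n_gt0; have n_neq0 : n%:Z != 0 by rewrite eqz_nat -lt0n.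
apply: (sub_finite_set _ (finite_image Posz (finite_II n))).
move=> _ [k _ <-]; exists `|(u k %% n)%Z|%N; last by rewrite gez0_abs ?modz_ge0.
by rewrite /= -ltz_nat gez0_abs ?modz_ge0 // ltz_pmod // ltz_nat.
Qed.

Lemma fraction_lowest_terms (s0 t0 : int) : 0 < t0 ->
  exists s t g : int, [/\ 0 < g, 0 < t, s0 = s * g, t0 = t * g & coprimez s t].
Proof.
move=> t0_gt0; pose g := gcdz s0 t0.
have s0E : s0 = (s0 %/ g)%Z * g by rewrite divzK // dvdz_gcdl.
have t0E : t0 = (t0 %/ g)%Z * g by rewrite divzK // dvdz_gcdr.
have g_gt0 : 0 < g by rewrite ltz_nat gcdn_gt0 [(0 < `|t0|)%N]absz_gt0 lt0r_neq0 ?orbT.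
exists (s0 %/ g)%Z, (t0 %/ g)%Z, g; split => //.
  by move: t0_gt0; rewrite {1}t0E pmulr_lgt0.
have := mulz_gcdl (s0 %/ g)%Z (t0 %/ g)%Z g; rewrite -s0E -t0E gtz0_abs // => gE.
by apply/eqP/(mulIf (lt0r_neq0 g_gt0)); rewrite mul1r gE.
Qed.

Lemma coprimez_unimodular (s t : int) : 0 < t -> coprimez s t ->
  exists b d : int, s * d - b * t = 1 /\ 0 <= d < t.
Proof.
move=> t_gt0 /coprimezP[[u v] /= uv1].
exists (- (v + (u %/ t)%Z * s)), (u %% t)%Z; split.
  by rewrite -uv1 [u in RHS](divz_eq u t); ring.
by rewrite modz_ge0 ?lt0r_neq0 //= ltz_pmod.
Qed.

(** * Rational approximation of irrationals *)

Lemma irrational_lin_neq0 (xi : RR) (s t : int) : Defs.irrational xi -> t != 0 ->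
  s%:~R - t%:~R * xi != 0.
Proof.
move=> xi_irr t_neq0; apply/negP => /eqP st0; apply: xi_irr.
exists (s%:~R / t%:~R); rewrite (fmorph_div (@ratr RR)) !(rmorph_int (@ratr RR)).
have -> : (s%:~R : RR) = t%:~R * xi by apply/eqP; rewrite -subr_eq0 st0.
by rewrite mulrAC divff ?mul1r // intr_eq0.
Qed.

Lemma unit_interval_pigeonhole (R : archiRealFieldType) (f : nat -> R) (N : nat) :
  (forall k, 0 <= f k < 1) ->
  exists k1 k2 : nat, (k1 < k2 <= N.+1)%N /\ N.+1%:R * `|f k1 - f k2| < 1.
Proof.
move=> f01; pose box k := Num.floor (N.+1%:R * f k).
have box_ge0 k : 0 <= box k by rewrite floor_ge0 mulr_ge0 //; case/andP: (f01 k).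
have box_lt k : (`|box k| < N.+1)%N.
  suff : box k < N.+1%:Z by have := box_ge0 k; lia.
  rewrite floor_lt_int; case/andP: (f01 k) => _ fk1.
  by rewrite -[X in _ < X]mulr1 ltr_pM2l.
pose h (k : 'I_N.+2) : 'I_N.+1 := inord `|box k|.
have : ~ injective h by move/leq_card; rewrite !card_ord ltnn.
move=> /existsNP[i /existsNP[j /not_implyP[hij i_neq_j]]].
have box_eq : box i = box j.
  have := congr1 val hij; rewrite /= !inordK ?box_lt // => e.
  by have := box_ge0 i; have := box_ge0 j; lia.
have close : N.+1%:R * `|f i - f j| < 1.
  have := floor_le (N.+1%:R * f i); have := floorD1_gt (N.+1%:R * f i).
  have := floor_le (N.+1%:R * f j); have := floorD1_gt (N.+1%:R * f j).
  rewrite -/(box i) -/(box j) box_eq intrD => h1 h2 h3 h4.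
  rewrite -[N.+1%:R]ger0_norm // -normrM mulrBr ltr_norml; apply/andP; split; lra.
have i_neq_j' : (i : nat) != j by apply/eqP => ij; apply/i_neq_j/val_inj.
have := ltn_ord i; have := ltn_ord j; have [ij|ji] := ltnP i j => iN jN.
  by exists i, j; split => //; lia.
by exists j, i; rewrite distrC; split => //; lia.
Qed.

Lemma dirichlet (xi : RR) (N : nat) :
  exists s t : int, [/\ 0 < t, t <= N.+1%:Z &
     N.+1%:R * `|s%:~R - t%:~R * xi| < 1 :> RR].
Proof.
pose fr (k : nat) := k%:R * xi - (Num.floor (k%:R * xi))%:~R.
have fr01 k : 0 <= fr k < 1.
  by have := floor_le (k%:R * xi); have := floorD1_gt (k%:R * xi); rewrite intrD /fr; lra.
have [k1 [k2 [/andP[k12 k2N] close]]] := unit_interval_pigeonhole N fr01.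
exists (Num.floor (k2%:R * xi) - Num.floor (k1%:R * xi)), (k2%:Z - k1%:Z).
split; [lia | lia |].
suff -> : ((Num.floor (k2%:R * xi) - Num.floor (k1%:R * xi))%:~R
    - (k2%:Z - k1%:Z)%:~R * xi : RR) = fr k1 - fr k2 by [].
by rewrite /fr !intrD !intrN -!/(_%:R); ring.
Qed.

Lemma irrational_far_from_small_den (xi : RR) (K : nat) : Defs.irrational xi ->
  exists2 del : RR, 0 < del & forall s t : int, 0 < t -> t <= K%:Z ->
    del <= `|s%:~R - t%:~R * xi|.
Proof.
move=> xi_irr; elim: K => [|K [del del_gt0 IH]]; first by exists 1 => // s t; lia.
pose x : RR := K.+1%:R * xi; pose f := Num.floor x.
have f_le := floor_le x; have f_gt := floorD1_gt x.
have f_lt : f%:~R < x.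
  rewrite lt_neqAle f_le andbT -subr_eq0.
  exact: (@irrational_lin_neq0 xi f K.+1%:Z xi_irr isT).
exists (Num.min del (Num.min (x - f%:~R) ((f + 1)%:~R - x))).
  by rewrite !lt_min del_gt0 !subr_gt0 f_lt f_gt.
move=> s t t_gt0 tK.
have [tK'|->] : t <= K%:Z \/ t = K.+1%:Z by lia.
  by rewrite ge_min IH.
rewrite !ge_min; apply/orP; right; apply/orP.
have [sf|fs] := lerP s f.
  by left; rewrite distrC (le_trans _ (ler_norm _)) // lerD2l lerN2 ler_int.
right; rewrite (le_trans _ (ler_norm _)) // lerD2r ler_int; lia.
Qed.

(** * The quantities lambda_n *)

Section LambdaTerm.
Variables (n : nat) (xi : RR).

Lemma lam_termE (s t : int) : t != 0 ->
  lam_term n xi s t = (gcdZ t n)%:R / (`|t%:~R| * `|s%:~R - t%:~R * xi|).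
Proof.
move=> t_neq0; have tR_neq0 : (t%:~R : RR) != 0 by rewrite intr_eq0.
rewrite /lam_term -(real_normK (num_real (t%:~R : RR))).
rewrite (_ : s%:~R / t%:~R - xi = (s%:~R - t%:~R * xi) / t%:~R); last by field.
rewrite normrM normfV expr2 RdivE RmultE; congr (_ / _).
by field; rewrite normr_eq0.
Qed.

Lemma lam_termNN (s t : int) : lam_term n xi (- s) (- t) = lam_term n xi s t.
Proof. by rewrite /lam_term gcdZN !intrN sqrrN invrN mulrN mulNr opprK. Qed.

Lemma lam_term_scale_le (s t g : int) : (0 < n)%N -> 0 < g ->
  lam_term n xi (s * g) (t * g) <= lam_term n xi s t.
Proof.
move=> n_gt0 g_gt0; have gR_gt0 : (0 : RR) < g%:~R by rewrite ltr0z.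
rewrite /lam_term !RdivE !RmultE !intrM -mulf_div divff ?gt_eqF // mulr1.
rewrite exprMn mulrAC; set D := _ * `|_|.
have [->|D_neq0] := eqVneq D 0; first by rewrite !mul0r !invr0 !mulr0.
have D_gt0 : 0 < D by rewrite lt0r D_neq0 mulr_ge0 ?sqr_ge0.
have gcd_le : ((gcdZ (t * g) n)%:R : RR) <= (gcdZ t n)%:R * g%:~R ^+ 2.
  apply: (@le_trans _ _ ((gcdZ t n)%:R * g%:~R)).
    have -> : (g%:~R : RR) = (`|g|%N)%:R by rewrite natr_absz gtr0_norm.
    by rewrite -natrM ler_nat mulnC gcdZ_mulr_le ?gt_eqF.
  have g_ge1 : (1 : RR) <= g%:~R by rewrite ler1z; lia.
  by apply: ler_wpM2l => //; rewrite expr2; nra.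
rewrite ler_pdivrMr; last by rewrite mulr_gt0 ?exprn_gt0.
rewrite (_ : _ / D * _ = (gcdZ t n)%:R * g%:~R ^+ 2) //.
by field.
Qed.

End LambdaTerm.

Lemma dist_frac_le (xi : RR) (s t : int) : t != 0 ->
  `|s%:~R / t%:~R - xi| <= `|s%:~R - t%:~R * xi|.
Proof.
move=> t_neq0; have tR_neq0 : (t%:~R : RR) != 0 by rewrite intr_eq0.
rewrite (_ : _ - xi = (s%:~R - t%:~R * xi) / t%:~R); last by field.
rewrite normrM normfV ler_pdivrMr ?normr_gt0 // ler_peMr // -intr_norm ler1z.
by rewrite -gtz0_ge1 normr_gt0.
Qed.

Section LambdaN.
Variables (n : nat) (xi a : RR).
Hypothesis lambda_xi : lambda_n n xi = a%:E.

Lemma lambda_n_ub (e : RR) : 0 < e ->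
  exists2 del : RR, 0 < del & forall s t : int, t != 0 ->
    `|s%:~R / t%:~R - xi| < del -> lam_term n xi s t <= a + e.
Proof.
move=> e_gt0; have : (lambda_n n xi < (a + e)%:E)%E by rewrite lambda_xi lte_fin ltrDl.
case/ereal_inf_lt => _ [del del_gt0 <-] sup_lt; exists del => // s t t_neq0 st_near.
wlog t_gt0 : s t t_neq0 st_near / 0 < t => [wlog_gt0|].
  have [t_lt0|t_gt0] := ltrP t 0; last by apply: wlog_gt0; rewrite // lt0r t_neq0.
  rewrite -lam_termNN; apply: wlog_gt0; rewrite ?oppr_eq0 ?oppr_gt0 //.
  by rewrite !intrN invrN mulrNN.
apply/ltW; rewrite -lte_fin (le_lt_trans _ sup_lt) //.
by apply: ereal_sup_ubound; exists s, t.
Qed.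

Lemma lambda_n_lb (d e : RR) : 0 < d -> 0 < e ->
  exists s t : int, [/\ 0 < t, `|s%:~R / t%:~R - xi| < d & a - e < lam_term n xi s t].
Proof.
move=> d_gt0 e_gt0.
pose S := [set y | exists s t : int,
  [/\ 0 < t, `|s%:~R / t%:~R - xi| < d & y = (lam_term n xi s t)%:E]].
have : ((a - e)%:E < ereal_sup S)%E.
  apply: (@lt_le_trans _ _ (lambda_n n xi)); first by rewrite lambda_xi lte_fin gtrBl.
  by apply: ereal_inf_lbound; exists d.
by case/ereal_sup_gt => _ [s [t [t_gt0 st_near ->]]]; rewrite lte_fin; exists s, t.
Qed.

Lemma lambda_n_ge1 : (0 < n)%N -> Defs.irrational xi -> 1 <= a.
Proof.
move=> n_gt0 xi_irr; rewrite -lee_fin -lambda_xi.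
apply: le_ereal_inf_tmp => _ [d d_gt0 <-].
have [s [t [t_gt0 tN st_close]]] := dirichlet xi (Num.trunc d^-1).
set N := (Num.trunc d^-1).+1 in tN st_close.
have dN : d^-1 < N%:R by apply: truncnS_gt.
have tR_ge1 : (1 : RR) <= t%:~R by rewrite ler1z; lia.
have tR_le : (t%:~R : RR) <= N%:R by rewrite -[N%:R]/((N%:Z)%:~R) ler_int.
have gcd_ge1 : (1 : RR) <= (gcdZ t n)%:R by rewrite ler1n gcdZ_gt0.
have N_gt0 : 0 < N%:R :> RR by rewrite ltr0n.
have X_lt_d : `|s%:~R - t%:~R * xi| < d.
  have : d * d^-1 < d * N%:R by rewrite ltr_pM2l.
  rewrite divff ?gt_eqF //.
  have : 0 <= `|s%:~R - t%:~R * xi| :> RR by [].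
  nra.
apply: (@le_trans _ _ (lam_term n xi s t)%:E); last first.
  apply: ereal_sup_ubound; exists s, t; split => //.
  rewrite (_ : _ - xi = (s%:~R - t%:~R * xi) / t%:~R); last by field; rewrite gt_eqF ?ltr0z.
  rewrite normrM normfV [`|t%:~R|]gtr0_norm ?ltr0z // ltr_pdivrMr ?ltr0z //.
  by rewrite (lt_le_trans X_lt_d) // ler_peMr // ltW.
rewrite lee_fin lam_termE ?gt_eqF // [`|t%:~R|]gtr0_norm ?ltr0z //.
rewrite ler_pdivlMr ?mulr_gt0 ?ltr0z //.
  by rewrite mul1r (le_trans _ gcd_ge1) //; nra.
by rewrite normr_gt0 irrational_lin_neq0 ?gt_eqF.
Qed.

End LambdaN.

(** * Unimodular changes of variables *)

Section Mobius.
Variables (R : fieldType) (A B C D : R).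
Hypothesis detM : A * D - B * C = 1.

Definition mobius (w : R) : R := (A * w + B) / (C * w + D).

Lemma mobius_sub_lin (w x y : R) : C * w + D != 0 ->
  (A * x + B * y) - (C * x + D * y) * mobius w = (x - y * w) / (C * w + D).
Proof. by move=> den_neq0; rewrite /mobius -[x - y * w]mul1r -detM; field. Qed.

Lemma mobius_subr (w w' : R) : C * w + D != 0 -> C * w' + D != 0 ->
  mobius w - mobius w' = (w - w') / ((C * w + D) * (C * w' + D)).
Proof.
by move=> den_neq0 den'_neq0; rewrite /mobius -[w - w']mul1r -detM; field; apply/andP.
Qed.

End Mobius.

Section MuMobius.
Variables (n : nat) (A B C D : int) (eta eta' a : RR).
Hypotheses (n_gt0 : (0 < n)%N) (detM : A * D - B * C = 1) (eta_neq : eta != eta').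
Hypothesis form_le : forall x y : int, (x, y) != (0, 0) ->
  (gcdZ (C * x + D * y) n)%:R * `|eta - eta'|
    <= a * (`|x%:~R - y%:~R * eta| * `|x%:~R - y%:~R * eta'|).
Hypothesis form_eq : (gcdZ C n)%:R * `|eta - eta'| = a.

Local Notation M := (mobius A%:~R B%:~R C%:~R D%:~R).

Let detMR : A%:~R * D%:~R - B%:~R * C%:~R = 1 :> RR.
Proof. by rewrite -!intrM -intrB detM. Qed.

Let lin_neq0 (x y : int) : (x, y) != (0, 0) ->
  x%:~R - y%:~R * eta != 0 /\ x%:~R - y%:~R * eta' != 0.
Proof.
move=> xy_neq0; have lhs_gt0 : 0 < (gcdZ (C * x + D * y) n)%:R * `|eta - eta'| :> RR.
  by rewrite mulr_gt0 ?ltr0n ?gcdZ_gt0 // normr_gt0 subr_eq0.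
have rhs_gt0 := lt_le_trans lhs_gt0 (form_le xy_neq0).
by split; apply/negP => /eqP lin0; move: rhs_gt0; rewrite lin0 normr0 ?mul0r ?mulr0 ltxx.
Qed.

Let den_neq0 : C%:~R * eta + D%:~R != 0 /\ C%:~R * eta' + D%:~R != 0.
Proof.
have DC_neq0 : (D, - C) != (0, 0).
  apply: contra_eq_neq detM => -[-> /eqP]; rewrite oppr_eq0 => /eqP ->.
  by rewrite !mulr0 subr0.
by have [] := lin_neq0 DC_neq0; rewrite !intrN !mulNr !opprK !(addrC D%:~R).
Qed.

Let mu_term_mobius (x y : int) : (x, y) != (0, 0) ->
  mu_term n (M eta) (M eta') (A * x + B * y) (C * x + D * y) =
  ((gcdZ (C * x + D * y) n)%:R * `|eta - eta'|
     / (`|x%:~R - y%:~R * eta| * `|x%:~R - y%:~R * eta'|))%:E.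
Proof.
move=> /lin_neq0[l_neq0 l'_neq0]; have [d_neq0 d'_neq0] := den_neq0.
rewrite /mu_term !intrD !intrM !mobius_sub_lin // mobius_subr //.
rewrite !normrM !normfV mulf_eq0 !mulf_eq0 !invr_eq0 !normr_eq0.
rewrite (negbTE l_neq0) (negbTE l'_neq0) (negbTE d_neq0) (negbTE d'_neq0) /=.
congr (_%:E); rewrite normrM; field.
by rewrite !normr_eq0 l_neq0 l'_neq0 d_neq0 d'_neq0.
Qed.

Lemma mu_n_mobius :
  [/\ M eta != M eta', mu_n n (M eta) (M eta') = a%:E &
      exists s t : int, (s, t) != (0, 0) /\ mu_term n (M eta) (M eta') s t = a%:E].
Proof.
have [d_neq0 d'_neq0] := den_neq0.
have M10 : mu_term n (M eta) (M eta') A C = a%:E.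
  have := @mu_term_mobius 1 0 isT.
  by rewrite !mulr1 !mulr0 !addr0 !mul0r !subr0 normr1 !mulr1 divr1 form_eq.
have AC_neq0 : (A, C) != (0, 0).
  by apply: contra_eq_neq detM => -[-> ->]; rewrite !mul0r mulr0 subr0.
split; last by exists A, C.
  by rewrite -subr_eq0 mobius_subr // mulf_eq0 invr_eq0 !mulf_eq0 subr_eq0 (negbTE eta_neq)
    (negbTE d_neq0) (negbTE d'_neq0).
apply/le_anti/andP; split.
  apply: ge_ereal_sup => _ [[p q] /= pq_neq0 <-].
  pose x := D * p - B * q; pose y := A * q - C * p.
  have [pE qE] : p = A * x + B * y /\ q = C * x + D * y.
    by split; rewrite /x /y -[LHS]mulr1 -detM; ring.
  have xy_neq0 : (x, y) != (0, 0).
    by apply: contra_neq pq_neq0 => -[x0 y0]; rewrite pE qE x0 y0 !mulr0 addr0.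
  rewrite pE qE mu_term_mobius // lee_fin ler_pdivrMr; first exact: form_le.
  by case: (lin_neq0 xy_neq0) => ? ?; rewrite mulr_gt0 ?normr_gt0.
by rewrite -M10; apply: ereal_sup_ubound; exists (A, C).
Qed.

End MuMobius.

(** * Subsequences and limits *)

Lemma increasing_seq_ge (f : nat -> nat) : increasing_seq f -> forall j, (j <= f j)%N.
Proof.
move=> /increasing_seqP f_incr; elim=> [|j IH] //.
by apply: leq_ltn_trans IH _; exact: f_incr.
Qed.

Lemma increasing_seq_comp (f g : nat -> nat) :
  increasing_seq f -> increasing_seq g -> increasing_seq (f \o g).
Proof. by move=> f_incr g_incr m k /=; rewrite (f_incr (g m) (g k)); exact: g_incr. Qed.

Lemma cvgn_increasing (f : nat -> nat) : increasing_seq f -> f @ \oo --> \oo.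
Proof.
move=> f_incr P [N _ PN]; exists N => // j /= Nj.
by apply: PN; apply: leq_trans Nj (increasing_seq_ge f_incr j).
Qed.

Lemma near_increasing (f : nat -> nat) (P : nat -> Prop) : increasing_seq f ->
  (\forall k \near \oo, P k) -> \forall j \near \oo, P (f j).
Proof. by move=> f_incr; exact: cvgn_increasing f_incr P. Qed.

Section Subsequences.
Variable R : realType.

Lemma cvgn_subseq (u : R^nat) (f : nat -> nat) :
  increasing_seq f -> cvgn u -> cvgn (u \o f).
Proof.
move=> f_incr /cvg_ex[l ul]; apply/cvg_ex; exists l.
exact: cvg_comp (cvgn_increasing f_incr) ul.
Qed.

Lemma bounded_subseq (u : R^nat) (M : R) :
  (forall k, `|u k| <= M) -> exists2 f : nat -> nat, increasing_seq f & cvgn (u \o f).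
Proof.
move=> u_le; apply: bolzano_weierstrass; exists M; split; first by rewrite num_real.
by move=> M' M_lt k _; apply: le_trans (u_le k) (ltW M_lt).
Qed.

Lemma finite_range_cst_subseq (T : Type) (c : nat -> T) : finite_set (range c) ->
  exists2 f : nat -> nat, increasing_seq f & forall j, c (f j) = c (f 0).
Proof.
move=> /finite_range_cst_subsequence[x [A A_infinite Ac]].
have [|f [f_incr _ fA]] := infinite_increasing_seq_wf _ A_infinite 0.
  by move=> m; apply: sub_finite_set (finite_II m.+1) => k /=.
by exists f => // j; rewrite !(Ac _).1.
Qed.

Lemma cvg_cst_subseq (T : Type) (c : nat -> T) (u v : R^nat) (Mu Mv : R) :
  finite_set (range c) -> (forall k, `|u k| <= Mu) -> (forall k, `|v k| <= Mv) ->
  exists phi : nat -> nat, [/\ increasing_seq phi, forall j, c (phi j) = c (phi 0),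
                              cvgn (u \o phi) & cvgn (v \o phi)].
Proof.
move=> /finite_range_cst_subseq[f0 f0_incr cf0] u_le v_le.
have [f1 f1_incr cvg_u] := bounded_subseq (fun j => u_le (f0 j)).
have [f2 f2_incr cvg_v] := bounded_subseq (fun j => v_le (f0 (f1 j))).
exists (f0 \o f1 \o f2); split.
- by do 2!apply: increasing_seq_comp.
- by move=> j; rewrite /= !cf0.
- exact: cvgn_subseq f2_incr cvg_u.
- exact: cvg_v.
Qed.

End Subsequences.

Lemma le_mul_addgt0 (R : realFieldType) (x a P : R) : 0 <= P ->
  (forall e, 0 < e -> x <= (a + e) * P) -> x <= a * P.
Proof.
move=> P_ge0 x_le; apply/ler_addgt0Pr => e e_gt0.
have P1_gt0 : 0 < P + 1 by rewrite ltr_wpDl.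
apply: (le_trans (x_le _ (divr_gt0 e_gt0 P1_gt0))).
rewrite mulrDl lerD2l mulrAC ler_pdivrMr //.
by apply: ler_wpM2l; [exact: ltW | rewrite lerDl].
Qed.

Section LimitForm.
Variables (R : realFieldType) (u v : R^nat) (L L' : R).
Hypotheses (uL : u @ \oo --> L) (vL : v @ \oo --> L').

Let cvg_gap (G : R) : (fun k => G * `|v k - u k|) @ \oo --> G * `|L' - L|.
Proof. by apply: cvgM; [exact: cvg_cst | apply: cvg_norm; exact: cvgB]. Qed.

Lemma ge_lim_gap (m G : R) :
  (\forall k \near \oo, m <= G * `|v k - u k|) -> m <= G * `|L' - L|.
Proof.
by apply: (@ler_cvg_to _ \oo _ _ (fun=> m) (fun k => G * `|v k - u k|));
  [exact: cvg_cst | exact: cvg_gap].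
Qed.

Lemma le_lim_form (G c x y : R) :
  (\forall k \near \oo, G * `|v k - u k| <= c * (`|x - y * v k| * `|x - y * u k|)) ->
  G * `|L' - L| <= c * (`|x - y * L'| * `|x - y * L|).
Proof.
apply: (@ler_cvg_to _ \oo _ _ (fun k => G * `|v k - u k|)); first exact: cvg_gap.
apply: cvgM; first exact: cvg_cst.
apply: cvgM; apply: cvg_norm; apply: cvgB; try exact: cvg_cst.
  by apply: cvgM; [exact: cvg_cst | exact: vL].
by apply: cvgM; [exact: cvg_cst | exact: uL].
Qed.

End LimitForm.

(** * From lambda_n to mu_n *)

Lemma unimodular_lin_neq0 (s b t d x y : int) : s * d - b * t = 1 ->
  (x, y) != (0, 0) -> `|y| < t -> t * x + d * y != 0.
Proof.
move=> detM xy_neq0 y_lt; apply/eqP => T0.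
have yE : y = - t * (s * x + b * y).
  rewrite -[LHS]mulr1 -detM.
  transitivity (s * (t * x + d * y) - t * (s * x + b * y)); first by ring.
  by rewrite T0 mulr0 sub0r mulNr.
have t_gt0 : 0 < t by rewrite (le_lt_trans _ y_lt).
have [S0|S_neq0] := eqVneq (s * x + b * y) 0.
  have y0 : y = 0 by rewrite yE S0 mulr0.
  move: T0; rewrite y0 mulr0 addr0 => /eqP; rewrite mulf_eq0 gt_eqF //= => /eqP x0.
  by move: xy_neq0; rewrite x0 y0 eqxx.
move: y_lt; rewrite yE normrM normrN [`|t|]gtr0_norm // -[X in _ < X]mulr1 ltr_pM2l //.
by rewrite ltNge -gtz0_ge1 normr_gt0 S_neq0.
Qed.

Section Approximation.
Variables (n : nat) (xi a : RR).
Hypotheses (n_gt0 : (0 < n)%N) (xi_irr : Defs.irrational xi).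
Hypothesis lambda_xi : lambda_n n xi = a%:E.

Definition good_approx (k : nat) (s b t d : int) : Prop :=
  [/\ k%:Z < t, s * d - b * t = 1, 0 <= d < t,
      lam_term n xi s t <= a + 1 & a - k.+2%:R^-1 < lam_term n xi s t].

Lemma good_approx_exists (k : nat) : exists s b t d : int, good_approx k s b t d.
Proof.
have [d1 d1_gt0 lam_ub] := lambda_n_ub lambda_xi ltr01.
have [d2 d2_gt0 far] := irrational_far_from_small_den k xi_irr.
(* With [del <= d2 / k.+1], no fraction of denominator at most [k] is [del]-close to [xi]. *)
pose del := Num.min d1 (d2 / k.+1%:R).
have del_gt0 : 0 < del by rewrite lt_min d1_gt0 divr_gt0.
have del_le1 : del <= d1 by rewrite ge_min lexx.
have del_le2 : del * k.+1%:R <= d2 by rewrite -ler_pdivlMr // ge_min lexx orbT.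
have inv_gt0 : 0 < k.+2%:R^-1 :> RR by rewrite invr_gt0.
have [s0 [t0 [t0_gt0 near0 lam_lb]]] := lambda_n_lb lambda_xi del_gt0 inv_gt0.
have [s [t [g [g_gt0 t_gt0 s0E t0E st_coprime]]]] := fraction_lowest_terms s0 t0_gt0.
have [b [d [detM d_range]]] := coprimez_unimodular t_gt0 st_coprime.
have st_near : `|s%:~R / t%:~R - xi| < del.
  rewrite (_ : s%:~R / t%:~R = s0%:~R / t0%:~R) // s0E t0E !intrM.
  by field; rewrite !intr_eq0 !gt_eqF.
exists s, b, t, d; split => //.
- rewrite ltNge; apply/negP => tk; have := far s t t_gt0 tk.
  rewrite (_ : s%:~R - _ = t%:~R * (s%:~R / t%:~R - xi)); last by field; rewrite intr_eq0 gt_eqF.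
  rewrite normrM gtr0_norm ?ltr0z //.
  have tR_le : (t%:~R : RR) <= k%:R by rewrite -[k%:R]/((k%:Z)%:~R) ler_int.
  have tR_ge0 : (0 : RR) <= t%:~R by rewrite ler0z ltW.
  have : (k.+1%:R : RR) = k%:R + 1 by rewrite -addn1 natrD.
  have : 0 <= `|s%:~R / t%:~R - xi| by [].
  nra.
- by apply: lam_ub; rewrite ?gt_eqF // (lt_le_trans st_near).
- by rewrite (lt_le_trans lam_lb) // s0E t0E lam_term_scale_le.
Qed.

Section ApproxSeq.
Variables (s b t d : nat -> int).
Hypothesis approx : forall k, good_approx k (s k) (b k) (t k) (d k).

(* The preimages of infinity and of xi under w |-> (s k * w + b k) / (t k * w + d k). *)
Definition pole (k : nat) : RR := - (d k)%:~R / (t k)%:~R.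
Definition preim (k : nat) : RR :=
  ((d k)%:~R * xi - (b k)%:~R) / ((s k)%:~R - (t k)%:~R * xi).

Let a_ge1 : 1 <= a. Proof. exact: lambda_n_ge1 lambda_xi n_gt0 xi_irr. Qed.

Lemma approx_t_gt (k : nat) : k%:Z < t k.
Proof. by case: (approx k). Qed.

Let t_gt0 (k : nat) : 0 < t k.
Proof. exact: le_lt_trans (approx_t_gt k). Qed.

Let tR_gt0 (k : nat) : (0 : RR) < (t k)%:~R.
Proof. by rewrite ltr0z. Qed.

Let tR_neq0 (k : nat) : (t k)%:~R != 0 :> RR.
Proof. by rewrite intr_eq0 gt_eqF. Qed.

Let err_neq0 (k : nat) : (s k)%:~R - (t k)%:~R * xi != 0.
Proof. by rewrite irrational_lin_neq0 ?gt_eqF. Qed.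

Lemma pole_bound (k : nat) : `|pole k| <= 1.
Proof.
have [_ _ /andP[d_ge0 d_lt] _ _] := approx k.
rewrite /pole normrM normrN normfV [`|(t k)%:~R|]gtr0_norm ?ltr0z //.
rewrite ger0_norm ?ler0z //.
by rewrite ler_pdivrMr ?ltr0z // mul1r ler_int ltW.
Qed.

Lemma preim_sub_pole (k : nat) :
  preim k - pole k = ((t k)%:~R * ((s k)%:~R - (t k)%:~R * xi))^-1.
Proof.
have [_ detM _ _ _] := approx k.
have detR : (s k)%:~R * (d k)%:~R - (b k)%:~R * (t k)%:~R = 1 :> RR.
  by rewrite -!intrM -intrB detM.
rewrite -div1r -[X in X / _]detR /preim /pole.
by field; rewrite tR_neq0 err_neq0.
Qed.

Lemma gap_lam_term (k : nat) :
  (gcdZ (t k) n)%:R * `|preim k - pole k| = lam_term n xi (s k) (t k).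
Proof. by rewrite preim_sub_pole lam_termE ?gt_eqF // normfV normrM. Qed.

Lemma gap_bound (k : nat) : `|preim k - pole k| <= a + 1.
Proof.
have [_ _ _ lam_ub _] := approx k; rewrite -gap_lam_term in lam_ub.
apply: le_trans lam_ub; rewrite ler_peMl // ler1n gcdZ_gt0 //.
Qed.

Lemma preim_bound (k : nat) : `|preim k| <= a + 2.
Proof.
rewrite -(subrK (pole k) (preim k)) (le_trans (ler_normD _ _)) //.
by rewrite (_ : a + 2 = a + 1 + 1) ?lerD ?gap_bound ?pole_bound //; ring.
Qed.

Lemma approx_err_bound (k : nat) :
  (t k)%:~R * `|(s k)%:~R - (t k)%:~R * xi| <= 2 * n%:R.
Proof.
have [_ _ _ _] := approx k; rewrite lam_termE ?gt_eqF // gtr0_norm ?ltr0z //.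
set W := _ * `|_|; have W_gt0 : 0 < W by rewrite mulr_gt0 ?ltr0z ?normr_gt0.
rewrite ltr_pdivlMr // => lam_lb.
have half_le : 2^-1 <= a - k.+2%:R^-1 :> RR.
  have : k.+2%:R^-1 <= 2^-1 :> RR by rewrite lef_pV2 ?posrE // ler_nat.
  by move: k.+2%:R^-1 => e; have := a_ge1; lra.
have gcd_le : (gcdZ (t k) n)%:R <= n%:R :> RR by rewrite ler_nat gcdZ_le.
have := ler_wpM2r (ltW W_gt0) half_le.
by move: lam_lb; move: (a - _) => c; lra.
Qed.

Lemma lin_pole (k : nat) (x y : int) :
  x%:~R - y%:~R * pole k = (t k * x + d k * y)%:~R / (t k)%:~R.
Proof. by rewrite /pole intrD !intrM; field. Qed.

Lemma lin_preim (k : nat) (x y : int) :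
  x%:~R - y%:~R * preim k =
  ((s k * x + b k * y)%:~R - (t k * x + d k * y)%:~R * xi)
    / ((s k)%:~R - (t k)%:~R * xi).
Proof. by rewrite /preim !intrD !intrM; field. Qed.

Lemma gap_form_lam (k : nat) (x y : int) : t k * x + d k * y != 0 ->
  (gcdZ (t k * x + d k * y) n)%:R * `|preim k - pole k| =
  lam_term n xi (s k * x + b k * y) (t k * x + d k * y)
    * (`|x%:~R - y%:~R * preim k| * `|x%:~R - y%:~R * pole k|).
Proof.
move=> T_neq0; have TR_neq0 : (t k * x + d k * y)%:~R != 0 :> RR by rewrite intr_eq0.
have := irrational_lin_neq0 (s k * x + b k * y) xi_irr T_neq0.
rewrite lam_termE // preim_sub_pole lin_preim lin_pole => err'_neq0.
rewrite !normrM !normfV normrM; field.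
by rewrite !normr_eq0 TR_neq0 tR_neq0 err_neq0 err'_neq0.
Qed.

Lemma lin_den_eventually (x y : int) : (x, y) != (0, 0) ->
  \forall k \near \oo, t k * x + d k * y != 0.
Proof.
move=> xy_neq0; exists `|y|.+1 => // k /= yk.
have [_ detM _ _ _] := approx k.
by apply: unimodular_lin_neq0 detM xy_neq0 _; have := approx_t_gt k; lia.
Qed.

Lemma lin_err_eventually (x y : int) (del : RR) : 0 < del ->
  \forall k \near \oo,
    `|(s k * x + b k * y)%:~R - (t k * x + d k * y)%:~R * xi| < del.
Proof.
move=> del_gt0; pose K := `|x%:~R| + `|y%:~R| * (a + 2) : RR.
have K_ge0 : 0 <= K by rewrite addr_ge0 ?mulr_ge0 ?addr_ge0 ?(le_trans ler01 a_ge1).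
exists (Num.trunc (2 * n%:R * K / del)).+1 => // k /= Nk.
have tk_gt : 2 * n%:R * K / del < (t k)%:~R.
  apply: (lt_le_trans (truncnS_gt _)).
  have : (Num.trunc (2 * n%:R * K / del)).+1%:Z <= t k by have := approx_t_gt k; lia.
  by rewrite -(ler_int RR).
have lin_le : `|x%:~R - y%:~R * preim k| <= K.
  rewrite (le_trans (ler_normB _ _)) // lerD2l normrM ler_wpM2l // preim_bound //.
have errE : (s k * x + b k * y)%:~R - (t k * x + d k * y)%:~R * xi
    = ((s k)%:~R - (t k)%:~R * xi) * (x%:~R - y%:~R * preim k).
  by rewrite lin_preim; field.
rewrite errE normrM -(ltr_pM2l (tR_gt0 k)) mulrA.
apply: (le_lt_trans (ler_pM (mulr_ge0 _ _) _ (approx_err_bound k) lin_le)) => //.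
  by rewrite ler0z ltW.
by rewrite ltr_pdivrMr // mulrC in tk_gt.
Qed.

Lemma form_le_eventually (x y : int) (e : RR) : (x, y) != (0, 0) -> 0 < e ->
  \forall k \near \oo, (gcdZ (t k * x + d k * y) n)%:R * `|preim k - pole k|
    <= (a + e) * (`|x%:~R - y%:~R * preim k| * `|x%:~R - y%:~R * pole k|).
Proof.
move=> xy_neq0 e_gt0; have [del del_gt0 lam_ub] := lambda_n_ub lambda_xi e_gt0.
near=> k.
have T_neq0 : t k * x + d k * y != 0 by near: k; exact: lin_den_eventually.
rewrite gap_form_lam // ler_wpM2r ?mulr_ge0 // lam_ub //.
rewrite (le_lt_trans (dist_frac_le _ _ T_neq0)) //.
by near: k; exact: lin_err_eventually.
Unshelve. all: by end_near.
Qed.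

Lemma gap_lb_eventually (e : RR) : 0 < e ->
  \forall k \near \oo, a - e <= (gcdZ (t k) n)%:R * `|preim k - pole k|.
Proof.
move=> e_gt0; exists (Num.trunc e^-1) => // k /= ek.
have [_ _ _ _ lam_lb] := approx k; rewrite -gap_lam_term in lam_lb.
rewrite (le_trans _ (ltW lam_lb)) // lerD2l lerN2 -[e]invrK lef_pV2 ?posrE ?invr_gt0 //.
by rewrite (le_trans (ltW (truncnS_gt _))) // ler_nat ltnW.
Qed.

End ApproxSeq.

Lemma lambda_mu_attained : exists zeta zeta' : RR,
  [/\ zeta != zeta', mu_n n zeta zeta' = a%:E &
    exists s t : int, (s, t) != (0, 0) /\ mu_term n zeta zeta' s t = a%:E].
Proof.
have /choice[Q approx] : forall k, exists q : int * int * int * int,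
    good_approx k q.1.1.1 q.1.1.2 q.1.2 q.2.
  by move=> k; have [s [b [t [d ?]]]] := good_approx_exists k; exists (s, b, t, d).
pose s k := (Q k).1.1.1; pose b k := (Q k).1.1.2; pose t k := (Q k).1.2; pose d k := (Q k).2.
pose res k := ((t k %% n)%Z, (d k %% n)%Z).
have res_fin : finite_set (range res).
  apply: sub_finite_set (finite_setX (modz_finite_range t n_gt0) (modz_finite_range d n_gt0)).
  by move=> _ [k _ <-]; split; exists k.
have [phi [phi_incr res_phi cvg_preim cvg_pole]] :=
  cvg_cst_subseq res_fin (preim_bound approx) (pole_bound approx).
set eta' := limn _ in cvg_preim; set eta := limn _ in cvg_pole.
pose A := s (phi 0); pose B := b (phi 0); pose C := t (phi 0); pose D := d (phi 0).
have gcd_phi j x y : gcdZ (t (phi j) * x + d (phi j) * y) n = gcdZ (C * x + D * y) n.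
  by case: (res_phi j) => tC dD; apply: gcdZ_lin_modz.
have form_le x y : (x, y) != (0, 0) ->
    (gcdZ (C * x + D * y) n)%:R * `|eta' - eta|
      <= a * (`|x%:~R - y%:~R * eta'| * `|x%:~R - y%:~R * eta|).
  move=> xy_neq0; apply: le_mul_addgt0 => [|e e_gt0]; first by rewrite mulr_ge0.
  eapply (le_lim_form cvg_pole cvg_preim).
  apply: filterS (near_increasing phi_incr (form_le_eventually approx xy_neq0 e_gt0)).
  by move=> j; rewrite /= gcd_phi.
have form_eq : (gcdZ C n)%:R * `|eta' - eta| = a.
  apply/le_anti/andP; split.
    have := form_le 1 0 isT.
    by rewrite mulr1 mulr0 addr0 !mul0r !subr0 normr1 !mulr1.
  apply/ler_addgt0Pr => e e_gt0; rewrite -lerBlDr.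
  eapply (ge_lim_gap cvg_pole cvg_preim).
  apply: filterS (near_increasing phi_incr (gap_lb_eventually approx e_gt0)).
  by move=> j; have := gcd_phi j 1 0; rewrite /= !mulr1 !mulr0 !addr0 => ->.
have eta_neq : eta' != eta.
  rewrite -subr_eq0 -normr_eq0; apply/eqP => gap0.
  by have := lambda_n_ge1 lambda_xi n_gt0 xi_irr; rewrite -form_eq gap0 mulr0 ler10.
have [_ detM _ _ _] := approx (phi 0).
pose M := @mobius RR A%:~R B%:~R C%:~R D%:~R.
by exists (M eta'), (M eta); apply: mu_n_mobius.
Qed.

End Approximation.

Theorem proposition3p4 (n : nat) (hn : (0 < n)%N) :
  L_set n `<=` M_set n /\
  (forall a : RR, L_set n a ->
     exists xi xi' : RR,
       [/\ xi != xi', mu_n n xi xi' = a%:E &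
           exists s t : int, (s, t) != (0, 0) /\ mu_term n xi xi' s t = a%:E]).
Proof.
split => [a [xi [xi_irr lambda_xi]] | a [xi [xi_irr lambda_xi]]].
  by have [z [z' [z_neq mu_eq _]]] := lambda_mu_attained hn xi_irr lambda_xi; exists z, z'.
exact: lambda_mu_attained hn xi_irr lambda_xi.
Qed.
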